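(* Let $\Pi$ be a group and let $T$ be a function on $\Pi$ with values in an integral domain whose characteristic is not $2$. Then the following two sets of relations are equivalent: (P): (P1) $T(1)=2$; (P2) $T(g_1g_2)=T(g_2g_1)$; (P3) $T(g_1)T(g_2)T(g_3)+T(g_1g_2g_3)+T(g_1g_3g_2)-T(g_1g_2)T(g_3)-T(g_2g_3)T(g_1)-T(g_1g_3)T(g_2)=0$; (P4) $T(g)^2-T(g^2)=2$, for all $g,g_1,g_2,g_3\in\Pi$; (C): (C1) $T(1)=2$; (C2) $T(g_1)T(g_2)=T(g_1g_2)+T(g_1^{-1}g_2)$, for all $g_1,g_2\in\Pi$. *)

From mathcomp Require Import all_boot all_algebra.
Set Implicit Arguments. Unset Strict Implicit. Unset Printing Implicit Defensive.
Import GRing.Theory.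
Local Open Scope ring_scope.

Definition is_group (G : Type) (mul : G -> G -> G) (inv : G -> G) (e : G) : Prop :=
  (forall a b c, mul a (mul b c) = mul (mul a b) c) /\
  (forall a, mul e a = a) /\ (forall a, mul a e = a) /\
  (forall a, mul (inv a) a = e) /\ (forall a, mul a (inv a) = e).

Definition relP (G : Type) (mul : G -> G -> G) (e : G) (R : idomainType)
  (T : G -> R) : Prop :=
  T e = 2 /\
  (forall g1 g2, T (mul g1 g2) = T (mul g2 g1)) /\
  (forall g1 g2 g3,
     T g1 * T g2 * T g3 + T (mul (mul g1 g2) g3) + T (mul (mul g1 g3) g2)
     - T (mul g1 g2) * T g3 - T (mul g2 g3) * T g1 - T (mul g1 g3) * T g2 = 0) /\
  (forall g, T g ^+ 2 - T (mul g g) = 2).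

Definition relC (G : Type) (mul : G -> G -> G) (inv : G -> G) (e : G)
  (R : idomainType) (T : G -> R) : Prop :=
  T e = 2 /\
  (forall g1 g2, T g1 * T g2 = T (mul g1 g2) + T (mul (inv g1) g2)).

From mathcomp Require Import all_boot all_algebra.
From mathcomp Require Import ring.
Local Open Scope ring_scope.
Import GRing.Theory.

(* (P) => (C): (P3) at (x b^-1, b, b), simplified with (P4), reads
   2 (T(x b^-1) + T(x b) - T x T b) = 0, and 2 is cancellable; together
   with (P2) this is (C2).
   (C) => (P): (C2) at (a, 1) gives T(a^-1) = T a, hence (P2); (P4) is (C2)
   at (g, g), and (P3) follows by expanding each product of traces with (C2). *)

Section TraceRelations.

Variables (G : Type) (mul : G -> G -> G) (inv : G -> G) (e : G).
Hypothesis Ggrp : is_group mul inv e.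

Lemma mulA a b c : mul a (mul b c) = mul (mul a b) c.
Proof. by case: Ggrp. Qed.

Lemma mul1g a : mul e a = a.
Proof. by case: Ggrp => _ []. Qed.

Lemma mulg1 a : mul a e = a.
Proof. by case: Ggrp => _ [_ []]. Qed.

Lemma mulVg a : mul (inv a) a = e.
Proof. by case: Ggrp => _ [_ [_ []]]. Qed.

Lemma mulgV a : mul a (inv a) = e.
Proof. by case: Ggrp => _ [_ [_ []]]. Qed.

Lemma inv_unique a b : mul a b = e -> b = inv a.
Proof. by move=> ab1; rewrite -[b]mul1g -(mulVg a) -mulA ab1 mulg1. Qed.

Lemma invgK a : inv (inv a) = a.
Proof. by rewrite -(@inv_unique (inv a) a (mulVg a)). Qed.

Lemma invMg a b : inv (mul a b) = mul (inv b) (inv a).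
Proof.
by symmetry; apply: inv_unique; rewrite mulA -(mulA a b) mulgV mulg1 mulgV.
Qed.

Lemma mulgVK a b : mul (mul a (inv b)) b = a.
Proof. by rewrite -mulA mulVg mulg1. Qed.

Variables (R : idomainType) (T : G -> R).

Lemma relP_trace_mulV :
  (2 : R) != 0 -> relP mul e T ->
  forall x b, T (mul x (inv b)) + T (mul x b) = T x * T b.
Proof.
move=> two_neq0 [_ [_ [P3 P4]]] x b.
have := P3 (mul x (inv b)) b b.
rewrite mulgVK (_ : T (mul b b) = T b ^+ 2 - 2); last by rewrite -(P4 b); ring.
move=> P3b; apply/eqP; rewrite -subr_eq0.
rewrite -(mulIr_eq0 _ (mulIf two_neq0)) -P3b; apply/eqP; ring.
Qed.

Lemma relP_relC : (2 : R) != 0 -> relP mul e T -> relC mul inv e T.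
Proof.
move=> two_neq0 PT; have [Te [P2 _]] := PT; split=> // g1 g2.
by rewrite mulrC -(relP_trace_mulV two_neq0 PT) (P2 g2) (P2 g2) addrC.
Qed.

Section FromRelC.

Hypothesis CT : relC mul inv e T.

Lemma relC_trace_inv a : T (inv a) = T a.
Proof.
have [Te C2] := CT; have := C2 a e.
rewrite Te !mulg1 => C2a; apply: (addrI (T a)); rewrite -C2a; ring.
Qed.

Lemma relC_traceC g1 g2 : T (mul g1 g2) = T (mul g2 g1).
Proof.
have [_ C2] := CT; have := C2 g2 g1.
rewrite -[T (mul (inv g2) g1)]relC_trace_inv invMg invgK mulrC C2.
exact: addIr.
Qed.

Lemma relC_cubic g1 g2 g3 :
  T g1 * T g2 * T g3 + T (mul (mul g1 g2) g3) + T (mul (mul g1 g3) g2)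
  - T (mul g1 g2) * T g3 - T (mul g2 g3) * T g1 - T (mul g1 g3) * T g2 = 0.
Proof.
have [_ C2] := CT.
rewrite (C2 g1 g2) mulrDl (C2 (mul (inv g1) g2)) invMg invgK.
rewrite [T (mul g2 g3) * _]mulrC (C2 g1) [T (mul g1 g3) * _]mulrC (C2 g2).
by rewrite (relC_traceC g2 (mul g1 g3)) !mulA; ring.
Qed.

Lemma relC_relP : relP mul e T.
Proof.
have [Te C2] := CT; split=> //; split; first exact: relC_traceC.
split; first exact: relC_cubic.
by move=> g; rewrite expr2 C2 mulVg Te addrAC subrr add0r.
Qed.

End FromRelC.

End TraceRelations.

Theorem lemma3p2p2 (G : Type) (mul : G -> G -> G) (inv : G -> G) (e : G)
  (R : idomainType) (T : G -> R) :
  is_group mul inv e -> (2 : R) != 0 ->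
  (relP mul e T <-> relC mul inv e T).
Proof.
move=> Ggrp two_neq0; split; first exact: relP_relC.
exact: relC_relP.
Qed.
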